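(* Let $R$ be a complex superalgebra of type $(2,1)$ which is right alternative and nontrivial. Then $R$ is isomorphic to one of the following superalgebras, written in a homogeneous basis $e_1,e_2$ (even), $f_1$ (odd) by listing their nonzero products (all unlisted products of basis elements are zero): $\mathbf{R}_{01}$: $e_1e_1=e_1,\ e_2e_2=e_2$; $\mathbf{R}_{02}$: $e_1e_1=e_1,\ e_2e_2=e_2,\ e_1f_1=f_1,\ f_1e_1=f_1$; $\mathbf{R}_{03}$: $e_1e_1=e_1,\ e_2e_2=e_2,\ e_1f_1=f_1,\ f_1e_1=f_1,\ f_1f_1=e_1$; $\mathbf{R}_{04}$: $e_1e_1=e_1,\ e_2e_2=e_2,\ f_1e_1=f_1$; $\mathbf{R}_{05}$: $e_1e_1=e_1,\ e_2e_2=e_2,\ e_1f_1=f_1$; $\mathbf{R}_{06}$: $e_1e_1=e_1,\ e_2e_2=e_2,\ e_1f_1=f_1,\ f_1f_1=e_1$; $\mathbf{R}_{07}$: $e_1e_1=e_1,\ e_2e_2=e_2,\ e_2f_1=f_1,\ f_1e_1=f_1$; $\mathbf{R}_{08}$: $e_1e_1=e_1,\ e_2e_2=e_2,\ e_2f_1=f_1,\ f_1e_1=f_1,\ f_1f_1=e_2$; $\mathbf{R}_{09}$: $e_1e_1=e_1$; $\mathbf{R}_{10}$: $e_1e_1=e_1,\ f_1f_1=e_2$; $\mathbf{R}_{11}$: $e_1e_1=e_1,\ f_1e_1=f_1$; $\mathbf{R}_{12}$: $e_1e_1=e_1,\ f_1e_1=f_1,\ f_1f_1=e_2$; $\mathbf{R}_{13}$: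 $e_1e_1=e_1,\ e_1f_1=f_1$; $\mathbf{R}_{14}$: $e_1e_1=e_1,\ e_1f_1=f_1,\ f_1f_1=e_1$; $\mathbf{R}_{15}$: $e_1e_1=e_1,\ e_1f_1=f_1,\ f_1e_1=f_1$; $\mathbf{R}_{16}$: $e_1e_1=e_1,\ e_1f_1=f_1,\ f_1e_1=f_1,\ f_1f_1=e_1$; $\mathbf{R}_{17}$: $e_1e_1=e_1,\ e_1e_2=e_2,\ e_2e_1=e_2$; $\mathbf{R}_{18}$: $e_1e_1=e_1,\ e_1e_2=e_2,\ e_2e_1=e_2,\ e_1f_1=f_1$; $\mathbf{R}_{19}$: $e_1e_1=e_1,\ e_1e_2=e_2,\ e_2e_1=e_2,\ e_1f_1=f_1,\ f_1f_1=e_2$; $\mathbf{R}_{20}$: $e_1e_1=e_1,\ e_1e_2=e_2,\ e_2e_1=e_2,\ f_1e_1=f_1$; $\mathbf{R}_{21}$: $e_1e_1=e_1,\ e_1e_2=e_2,\ e_2e_1=e_2,\ e_1f_1=f_1,\ f_1e_1=f_1$; $\mathbf{R}_{22}$: $e_1e_1=e_1,\ e_1e_2=e_2,\ e_2e_1=e_2,\ e_1f_1=f_1,\ f_1e_1=f_1,\ f_1f_1=e_2$; $\mathbf{R}_{23}$: $e_1e_1=e_1,\ e_1e_2=e_2$; $\mathbf{R}_{24}$: $e_1e_1=e_1,\ e_1e_2=e_2,\ f_1f_1=e_2$; $\mathbf{R}_{25}$: $e_1e_1=e_1,\ e_2e_1=e_2$; $\mathbf{R}_{26}$: $e_1e_1=e_1,\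 e_2e_1=e_2,\ e_1f_1=f_1$; $\mathbf{R}_{27}$: $e_1e_1=e_1,\ e_2e_1=e_2,\ e_1f_1=f_1,\ f_1f_1=e_1$; $\mathbf{R}_{28}$: $e_1e_1=e_1,\ e_2e_1=e_2,\ e_1f_1=f_1,\ f_1f_1=e_2$; $\mathbf{R}_{29}$: $e_1e_1=e_1,\ e_1e_2=e_2,\ f_1e_1=f_1$; $\mathbf{R}_{30}$: $e_1e_1=e_1,\ e_1e_2=e_2,\ f_1e_1=f_1,\ f_1f_1=e_2$; $\mathbf{R}_{31}$: $e_1e_1=e_1,\ e_2e_1=e_2,\ f_1e_1=f_1$; $\mathbf{R}_{32}$: $e_1e_1=e_1,\ e_1e_2=e_2,\ e_1f_1=f_1$; $\mathbf{R}_{33}$: $e_1e_1=e_1,\ e_2e_1=e_2,\ e_1f_1=f_1,\ f_1e_1=f_1$; $\mathbf{R}_{34}$: $e_1e_1=e_1,\ e_2e_1=e_2,\ e_1f_1=f_1,\ f_1e_1=f_1,\ f_1f_1=e_1$; $\mathbf{R}_{35}$: $e_1e_1=e_1,\ e_2e_1=e_2,\ e_1f_1=f_1,\ f_1e_1=f_1,\ f_1f_1=e_2$; $\mathbf{R}_{36}$: $e_1e_1=e_1,\ e_1e_2=e_2,\ e_1f_1=f_1,\ f_1e_1=f_1$; $\mathbf{R}_{37}$: $e_1e_1=e_2$; $\mathbf{R}_{38}$: $e_1e_1=e_2,\ f_1f_1=e_2$; $\mathbf{R}_{39}$: $f_1f_1=e_1$.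
   Context: All algebras are over $\mathbb{C}$. A superalgebra is a $\mathbb{Z}_2$-graded algebra $A=A_0\oplus A_1$ with $A_iA_j\subseteq A_{i+j \bmod 2}$; for a homogeneous element $x$, $|x|\in\{0,1\}$ denotes its degree. It has type $(n,m)$ if $\dim A_0=n$ and $\dim A_1=m$. Isomorphisms of superalgebras are grading-preserving algebra isomorphisms. The associator is $(x,y,z)=(xy)z-x(yz)$. A superalgebra is right alternative if $(x,y,z)=-(-1)^{|y||z|}(x,z,y)$ for all homogeneous $x,y,z$. A superalgebra is trivial if all its products are zero. *)

From HB Require Import structures.
From mathcomp Require Import all_boot all_algebra complex.
From mathcomp Require Import Rstruct.
Set Implicit Arguments. Unset Strict Implicit. Unset Printing Implicit Defensive.
Import GRing.Theory.
Local Open Scope ring_scope.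

Definition C : numClosedFieldType := (Rdefinitions.R)[i].

(* A superalgebra of type (2,1) over C, written in a homogeneous basis
   e_1 = index 0, e_2 = index 1 (even), f_1 = index 2 (odd).
   It is given by its structure constants: sc i j = product of basis
   vectors i and j, as a row vector of coordinates in 'rV[C]_3. *)
Definition structc := 'I_3 -> 'I_3 -> 'rV[C]_3.

Definition bdeg (i : 'I_3) : bool := (i == 2%N :> nat).

Definition smul (T : structc) (x y : 'rV[C]_3) : 'rV[C]_3 :=
  \sum_(i < 3) \sum_(j < 3) (x 0 i * y 0 j) *: T i j.

Definition graded (T : structc) : Prop :=
  forall i j k : 'I_3, bdeg k != addb (bdeg i) (bdeg j) -> T i j 0 k = 0.

Definition homog (d : bool) (x : 'rV[C]_3) : Prop :=
  forall i : 'I_3, bdeg i != d -> x 0 i = 0.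

Definition assoc (T : structc) (x y z : 'rV[C]_3) : 'rV[C]_3 :=
  smul T (smul T x y) z - smul T x (smul T y z).

Definition right_alternative (T : structc) : Prop :=
  forall (dx dy dz : bool) (x y z : 'rV[C]_3),
    homog dx x -> homog dy y -> homog dz z ->
    assoc T x y z = - ((if dy && dz then -1 else 1) *: assoc T x z y).

Definition nontrivial (T : structc) : Prop :=
  exists x y : 'rV[C]_3, smul T x y != 0.

Definition super_iso (T T' : structc) : Prop :=
  exists P : 'M[C]_3,
    [/\ P \in unitmx,
        (forall i j : 'I_3, bdeg i != bdeg j -> P i j = 0) &
        forall x y : 'rV[C]_3, smul T x y *m P = smul T' (x *m P) (y *m P)].

(* structure constants from a list of nonzero products e_i e_j = e_k
   (triples (i, j, k) of indices: e1 = 0, e2 = 1, f1 = 2) *)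
Definition mkSC (l : seq (nat * nat * nat)) : structc :=
  fun i j => \row_(k < 3) (if ((i : nat), (j : nat), (k : nat)) \in l then 1 else 0).

Definition e1 := 0%N. Definition e2 := 1%N. Definition f1 := 2%N.

Definition Rmodel (n : nat) : structc :=
  mkSC match n with
  | 1 => [:: (e1,e1,e1); (e2,e2,e2)]
  | 2 => [:: (e1,e1,e1); (e2,e2,e2); (e1,f1,f1); (f1,e1,f1)]
  | 3 => [:: (e1,e1,e1); (e2,e2,e2); (e1,f1,f1); (f1,e1,f1); (f1,f1,e1)]
  | 4 => [:: (e1,e1,e1); (e2,e2,e2); (f1,e1,f1)]
  | 5 => [:: (e1,e1,e1); (e2,e2,e2); (e1,f1,f1)]
  | 6 => [:: (e1,e1,e1); (e2,e2,e2); (e1,f1,f1); (f1,f1,e1)]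
  | 7 => [:: (e1,e1,e1); (e2,e2,e2); (e2,f1,f1); (f1,e1,f1)]
  | 8 => [:: (e1,e1,e1); (e2,e2,e2); (e2,f1,f1); (f1,e1,f1); (f1,f1,e2)]
  | 9 => [:: (e1,e1,e1)]
  | 10 => [:: (e1,e1,e1); (f1,f1,e2)]
  | 11 => [:: (e1,e1,e1); (f1,e1,f1)]
  | 12 => [:: (e1,e1,e1); (f1,e1,f1); (f1,f1,e2)]
  | 13 => [:: (e1,e1,e1); (e1,f1,f1)]
  | 14 => [:: (e1,e1,e1); (e1,f1,f1); (f1,f1,e1)]
  | 15 => [:: (e1,e1,e1); (e1,f1,f1); (f1,e1,f1)]
  | 16 => [:: (e1,e1,e1); (e1,f1,f1); (f1,e1,f1); (f1,f1,e1)]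
  | 17 => [:: (e1,e1,e1); (e1,e2,e2); (e2,e1,e2)]
  | 18 => [:: (e1,e1,e1); (e1,e2,e2); (e2,e1,e2); (e1,f1,f1)]
  | 19 => [:: (e1,e1,e1); (e1,e2,e2); (e2,e1,e2); (e1,f1,f1); (f1,f1,e2)]
  | 20 => [:: (e1,e1,e1); (e1,e2,e2); (e2,e1,e2); (f1,e1,f1)]
  | 21 => [:: (e1,e1,e1); (e1,e2,e2); (e2,e1,e2); (e1,f1,f1); (f1,e1,f1)]
  | 22 => [:: (e1,e1,e1); (e1,e2,e2); (e2,e1,e2); (e1,f1,f1); (f1,e1,f1); (f1,f1,e2)]
  | 23 => [:: (e1,e1,e1); (e1,e2,e2)]
  | 24 => [:: (e1,e1,e1); (e1,e2,e2); (f1,f1,e2)]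
  | 25 => [:: (e1,e1,e1); (e2,e1,e2)]
  | 26 => [:: (e1,e1,e1); (e2,e1,e2); (e1,f1,f1)]
  | 27 => [:: (e1,e1,e1); (e2,e1,e2); (e1,f1,f1); (f1,f1,e1)]
  | 28 => [:: (e1,e1,e1); (e2,e1,e2); (e1,f1,f1); (f1,f1,e2)]
  | 29 => [:: (e1,e1,e1); (e1,e2,e2); (f1,e1,f1)]
  | 30 => [:: (e1,e1,e1); (e1,e2,e2); (f1,e1,f1); (f1,f1,e2)]
  | 31 => [:: (e1,e1,e1); (e2,e1,e2); (f1,e1,f1)]
  | 32 => [:: (e1,e1,e1); (e1,e2,e2); (e1,f1,f1)]
  | 33 => [:: (e1,e1,e1); (e2,e1,e2); (e1,f1,f1); (f1,e1,f1)]
  | 34 => [:: (e1,e1,e1); (e2,e1,e2); (e1,f1,f1); (f1,e1,f1); (f1,f1,e1)]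
  | 35 => [:: (e1,e1,e1); (e2,e1,e2); (e1,f1,f1); (f1,e1,f1); (f1,f1,e2)]
  | 36 => [:: (e1,e1,e1); (e1,e2,e2); (e1,f1,f1); (f1,e1,f1)]
  | 37 => [:: (e1,e1,e2)]
  | 38 => [:: (e1,e1,e2); (f1,f1,e2)]
  | 39 => [:: (f1,f1,e1)]
  | _ => [::]
  end.

(* A graded structure of type (2,1) consists of its even part, a
   two-dimensional algebra, the scalars a_i, b_i with e_i f1 = a_i f1 and
   f1 e_i = b_i f1, and the even vector f1 f1.  The even part is brought to a
   normal form by a change of basis: it is zero if all squares vanish; if some
   y has y and y^2 independent, the basis (y, y^2) presents it as a quotient
   of t C[t] whose type is read off from the roots of a cubic; otherwise every
   square lies on its own line, which produces an idempotent e1, and then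
   e1 e2 and e2 e1 are 0 or e2.  For each of the seven normal forms, the right
   alternative identities with an odd argument force a_i, b_i into {0, 1},
   and f1 f1 is normalized by rescaling f1 by a square root, which leaves
   exactly the models R01-R39. *)

From mathcomp Require Import all_boot all_algebra complex.
From mathcomp Require Import ring Rstruct.
From Stdlib Require Import Classical FunctionalExtensionality.
Set Implicit Arguments. Unset Strict Implicit. Unset Printing Implicit Defensive.
Import GRing.Theory Num.Theory.
Local Open Scope ring_scope.

Section Bilinear.
Variable T : structc.

Lemma smulZl a x y : smul T (a *: x) y = a *: smul T x y.
Proof.
rewrite /smul scaler_sumr; apply: eq_bigr => i _.
by rewrite scaler_sumr; apply: eq_bigr => j _; rewrite !mxE scalerA mulrA.
Qed.

Lemma smulZr a x y : smul T x (a *: y) = a *: smul T x y.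
Proof.
rewrite /smul scaler_sumr; apply: eq_bigr => i _.
by rewrite scaler_sumr; apply: eq_bigr => j _; rewrite !mxE scalerA mulrCA.
Qed.

Lemma smul_suml n (F : 'I_n -> 'rV[C]_3) y :
  smul T (\sum_(k < n) F k) y = \sum_(k < n) smul T (F k) y.
Proof.
rewrite /smul; symmetry; rewrite exchange_big; apply: eq_bigr => i _.
rewrite exchange_big; apply: eq_bigr => j _.
by rewrite summxE mulr_suml scaler_suml.
Qed.

Lemma smul_sumr n (F : 'I_n -> 'rV[C]_3) x :
  smul T x (\sum_(k < n) F k) = \sum_(k < n) smul T x (F k).
Proof.
rewrite /smul; symmetry; rewrite exchange_big; apply: eq_bigr => i _.
rewrite exchange_big; apply: eq_bigr => j _.
by rewrite summxE mulr_sumr scaler_suml.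
Qed.

Lemma smul_mulmx x y (M : 'M[C]_3) :
  smul T (x *m M) (y *m M) =
  \sum_(i < 3) \sum_(j < 3) (x 0 i * y 0 j) *: smul T (row i M) (row j M).
Proof.
rewrite (mulmx_sum_row x) (mulmx_sum_row y) smul_suml; apply: eq_bigr => i _.
rewrite smul_sumr; apply: eq_bigr => j _.
by rewrite smulZl smulZr scalerA mulrC.
Qed.

Lemma smulE x y m :
  smul T x y 0 m = \sum_(a < 3) \sum_(b < 3) x 0 a * y 0 b * T a b 0 m.
Proof.
rewrite /smul summxE; apply: eq_bigr => a _; rewrite summxE; apply: eq_bigr => b _.
by rewrite mxE.
Qed.

End Bilinear.

Definition parity_preserving (M : 'M[C]_3) :=
  forall i j : 'I_3, bdeg i != bdeg j -> M i j = 0.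

Lemma homog_mulmx d x M : parity_preserving M -> homog d x -> homog d (x *m M).
Proof.
move=> hM hx k hk; rewrite mxE; apply: big1 => i _.
have [e|ne] := eqVneq (bdeg i) d; last by rewrite hx ?mul0r.
by rewrite hM ?mulr0 // e eq_sym.
Qed.

Lemma super_iso_refl T : super_iso T T.
Proof.
exists 1%:M; split=> [|i j|x y]; rewrite ?unitmx1 ?mulmx1 //.
by rewrite mxE; case: (eqVneq i j) => [->|]; rewrite ?eqxx.
Qed.

Lemma super_iso_trans T1 T2 T3 :
  super_iso T1 T2 -> super_iso T2 T3 -> super_iso T1 T3.
Proof.
move=> [P [uP bP mP]] [Q [uQ bQ mQ]]; exists (P *m Q); split.
- by rewrite unitmx_mul uP uQ.
- move=> i j hij; rewrite mxE; apply: big1 => k _.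
  have [e|ne] := eqVneq (bdeg k) (bdeg i); first by rewrite bQ ?mulr0 // e.
  by rewrite bP ?mul0r // eq_sym.
- by move=> x y; rewrite mulmxA mP mQ !mulmxA.
Qed.

Lemma smul_change_basis (T T' : structc) (M N : 'M[C]_3) : M *m N = 1%:M ->
  (forall i j, smul T (row i M) (row j M) = \sum_(k < 3) T' i j 0 k *: row k M) ->
  forall x y, smul T x y *m N = smul T' (x *m N) (y *m N).
Proof.
move=> MN rowsM x y.
have NM : N *m M = 1%:M by apply: mulmx1C.
have homM x' y' : smul T' x' y' *m M = smul T (x' *m M) (y' *m M).
  rewrite /smul mulmx_suml [RHS]smul_mulmx; apply: eq_bigr => i _.
  rewrite mulmx_suml; apply: eq_bigr => j _.
  by rewrite -scalemxAl rowsM -mulmx_sum_row.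
have -> : smul T x y = smul T' (x *m N) (y *m N) *m M.
  by rewrite homM -!mulmxA NM !mulmx1.
by rewrite -mulmxA MN mulmx1.
Qed.

Section Transfer.
Variables (T T' : structc) (P Q : 'M[C]_3).
Hypotheses (PQ : P *m Q = 1%:M)
  (homP : forall x y, smul T x y *m P = smul T' (x *m P) (y *m P)).

Lemma right_alternative_hom :
  parity_preserving Q -> right_alternative T -> right_alternative T'.
Proof.
move=> bQ hRA dx dy dz x y z hx hy hz.
have QP : Q *m P = 1%:M by apply: mulmx1C.
have QPK (w : 'rV[C]_3) : w = w *m Q *m P by rewrite -mulmxA QP mulmx1.
have assocP a b c : assoc T' (a *m P) (b *m P) (c *m P) = assoc T a b c *m P.
  by rewrite /assoc mulmxBl -!homP.
rewrite (QPK x) (QPK y) (QPK z) !assocP.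
rewrite (hRA dx dy dz _ _ _ (homog_mulmx bQ hx) (homog_mulmx bQ hy) (homog_mulmx bQ hz)).
by rewrite mulNmx -scalemxAl.
Qed.

Lemma nontrivial_hom : nontrivial T -> nontrivial T'.
Proof.
move=> [x [y nz]]; exists (x *m P), (y *m P); rewrite -homP.
apply: contra nz => /eqP xyP0.
by rewrite -[smul T x y]mulmx1 -PQ mulmxA xyP0 mul0mx.
Qed.

End Transfer.

Lemma super_iso_change_basis (T T' : structc) (M N : 'M[C]_3) :
  M *m N = 1%:M -> parity_preserving M -> parity_preserving N ->
  (forall i j, smul T (row i M) (row j M) = \sum_(k < 3) T' i j 0 k *: row k M) ->
  [/\ super_iso T T', right_alternative T -> right_alternative T'
    & nontrivial T -> nontrivial T'].
Proof.
move=> MN bM bN rowsM.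
have NM : N *m M = 1%:M by apply: mulmx1C.
have homN := smul_change_basis MN rowsM.
split; [exists N; split=> // | exact: right_alternative_hom NM homN bM
       | exact: nontrivial_hom NM homN].
by case: (mulmx1_unit MN).
Qed.

(* [gijk] is the coefficient of e_k in e_i e_j, with e_0 = e1 and e_1 = e2. *)
Record even_table := EvenTable {
  g000 : C; g001 : C; g010 : C; g011 : C; g100 : C; g101 : C; g110 : C; g111 : C }.

(* A graded structure: its even part, e_i f1 = efi f1, f1 e_i = fei f1 and
   f1 f1 = ff0 e1 + ff1 e2. *)
Record params := Params {
  even : even_table; ef0 : C; ef1 : C; fe0 : C; fe1 : C; ff0 : C; ff1 : C }.

Definition ecoef (g : even_table) (i j k : nat) : C :=
  match i, j, k with
  | 0, 0, 0 => g000 g | 0, 0, 1 => g001 g | 0, 1, 0 => g010 g | 0, 1, 1 => g011 g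
  | 1, 0, 0 => g100 g | 1, 0, 1 => g101 g | 1, 1, 0 => g110 g | 1, 1, 1 => g111 g
  | _, _, _ => 0
  end.

Definition coef (p : params) (i j k : nat) : C :=
  match i, j, k with
  | 0, 2, 2 => ef0 p | 1, 2, 2 => ef1 p | 2, 0, 2 => fe0 p | 2, 1, 2 => fe1 p
  | 2, 2, 0 => ff0 p | 2, 2, 1 => ff1 p
  | _, _, _ => ecoef (even p) i j k
  end.

Definition sc (p : params) : structc := fun i j => \row_k coef p i j k.

Definition oe1 : 'I_3 := @Ordinal 3 e1 erefl.
Definition oe2 : 'I_3 := @Ordinal 3 e2 erefl.
Definition of1 : 'I_3 := @Ordinal 3 f1 erefl.

Definition params_of (T : structc) : params :=
  Params (EvenTable (T oe1 oe1 0 oe1) (T oe1 oe1 0 oe2)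
                    (T oe1 oe2 0 oe1) (T oe1 oe2 0 oe2)
                    (T oe2 oe1 0 oe1) (T oe2 oe1 0 oe2)
                    (T oe2 oe2 0 oe1) (T oe2 oe2 0 oe2))
         (T oe1 of1 0 of1) (T oe2 of1 0 of1) (T of1 oe1 0 of1)
         (T of1 oe2 0 of1) (T of1 of1 0 oe1) (T of1 of1 0 oe2).

Ltac case_ord3 i := let lt := fresh in case: i => [[|[|[|?]]] lt] //.

Lemma ord3_cases (i : 'I_3) : [\/ i = oe1, i = oe2 | i = of1].
Proof. by case_ord3 i; [constructor 1 | constructor 2 | constructor 3]; apply: val_inj. Qed.

Lemma params_ofK (T : structc) : graded T -> sc (params_of T) = T.
Proof.
move=> gT; apply: functional_extensionality => i.
apply: functional_extensionality => j; apply/rowP => k; rewrite mxE.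
by case: (ord3_cases i) => ->; case: (ord3_cases j) => ->;
  case: (ord3_cases k) => ->; rewrite //= gT.
Qed.

Lemma Rmodel_graded n : graded (Rmodel n).
Proof.
move=> i j k; rewrite mxE.
by case_ord3 i; case_ord3 j; case_ord3 k; do 40 (case: n => [|n] //).
Qed.

Definition classifiable (T : structc) :=
  exists2 n : nat, (1 <= n <= 39)%N & super_iso T (Rmodel n).

Lemma classifiable_model n p :
  (1 <= n <= 39)%N -> p = params_of (Rmodel n) -> classifiable (sc p).
Proof.
move=> n_range ->; rewrite params_ofK; last exact: Rmodel_graded.
by exists n; last exact: super_iso_refl.
Qed.

Definition emul (g : even_table) (x0 x1 y0 y1 : C) (k : nat) : C :=
  x0 * y0 * ecoef g 0 0 k + x0 * y1 * ecoef g 0 1 k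
  + x1 * y0 * ecoef g 1 0 k + x1 * y1 * ecoef g 1 1 k.

Section Rebase.
Variables (u0 u1 v0 v1 s : C).

Definition det2 := u0 * v1 - u1 * v0.

(* Cramer's rule: the coordinates of z0 e1 + z1 e2 in the basis u, v. *)
Definition ucoord (z0 z1 : C) := (z0 * v1 - z1 * v0) / det2.
Definition vcoord (z0 z1 : C) := (u0 * z1 - u1 * z0) / det2.

Definition rebase_even (g : even_table) : even_table :=
  let ucoord_mul x0 x1 y0 y1 := ucoord (emul g x0 x1 y0 y1 0) (emul g x0 x1 y0 y1 1) in
  let vcoord_mul x0 x1 y0 y1 := vcoord (emul g x0 x1 y0 y1 0) (emul g x0 x1 y0 y1 1) in
  EvenTable (ucoord_mul u0 u1 u0 u1) (vcoord_mul u0 u1 u0 u1)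
            (ucoord_mul u0 u1 v0 v1) (vcoord_mul u0 u1 v0 v1)
            (ucoord_mul v0 v1 u0 u1) (vcoord_mul v0 v1 u0 u1)
            (ucoord_mul v0 v1 v0 v1) (vcoord_mul v0 v1 v0 v1).

(* The structure constants in the basis u = u0 e1 + u1 e2, v = v0 e1 + v1 e2,
   s f1. *)
Definition rebase (p : params) : params :=
  Params (rebase_even (even p))
    (u0 * ef0 p + u1 * ef1 p) (v0 * ef0 p + v1 * ef1 p)
    (u0 * fe0 p + u1 * fe1 p) (v0 * fe0 p + v1 * fe1 p)
    (ucoord (s ^+ 2 * ff0 p) (s ^+ 2 * ff1 p)) (vcoord (s ^+ 2 * ff0 p) (s ^+ 2 * ff1 p)).

Definition basis_mx : 'M[C]_3 :=
  \matrix_(i < 3, j < 3)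
    nth 0 (nth [::] [:: [:: u0; u1; 0]; [:: v0; v1; 0]; [:: 0; 0; s]] i) j.

Definition basis_inv_mx : 'M[C]_3 :=
  \matrix_(i < 3, j < 3)
    nth 0 (nth [::] [:: [:: v1 / det2; - u1 / det2; 0];
                        [:: - v0 / det2; u0 / det2; 0]; [:: 0; 0; s^-1]] i) j.

Hypotheses (det2_neq0 : det2 != 0) (s_neq0 : s != 0).

Lemma basis_mx_mul p i j :
  smul (sc p) (row i basis_mx) (row j basis_mx) =
  \sum_(k < 3) sc (rebase p) i j 0 k *: row k basis_mx.
Proof.
apply/rowP => m; rewrite smulE summxE !big_ord_recr !big_ord0 /= !add0r !mxE /=.
move: det2_neq0; rewrite /det2 => hd.
by case_ord3 i; case_ord3 j; case_ord3 m;
  rewrite /= /rebase /ucoord /vcoord /emul /det2 /=; field.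
Qed.

Lemma basis_mxK : basis_mx *m basis_inv_mx = 1%:M.
Proof.
apply/matrixP => i j; rewrite !mxE !big_ord_recr big_ord0 /= !mxE.
move: det2_neq0; rewrite /det2 => hd.
by case_ord3 i; case_ord3 j; rewrite /=; field.
Qed.

Lemma rebase_spec p :
  [/\ super_iso (sc p) (sc (rebase p)),
      right_alternative (sc p) -> right_alternative (sc (rebase p))
    & nontrivial (sc p) -> nontrivial (sc (rebase p))].
Proof.
apply: (super_iso_change_basis basis_mxK) => [i j|i j|]; last exact: basis_mx_mul.
  by case_ord3 i; case_ord3 j; rewrite /bdeg /= => _; rewrite mxE.
by case_ord3 i; case_ord3 j; rewrite /bdeg /= => _; rewrite mxE.
Qed.

End Rebase.

Definition ra_classifiable (p : params) :=
  right_alternative (sc p) -> nontrivial (sc p) -> classifiable (sc p).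

Lemma classifiable_rebase u0 u1 v0 v1 s p :
  det2 u0 u1 v0 v1 != 0 -> s != 0 ->
  ra_classifiable (rebase u0 u1 v0 v1 s p) -> ra_classifiable p.
Proof.
move=> hd hs cl_q hRA hN; have [iso RA_q N_q] := rebase_spec hd hs p.
have [n n_range iso_n] := cl_q (RA_q hRA) (N_q hN).
by exists n => //; apply: super_iso_trans iso iso_n.
Qed.

Definition sum3 (f : nat -> C) := f 0%N + f 1%N + f 2%N.

Lemma sum3E (f : nat -> C) : \sum_(a < 3) f a = sum3 f.
Proof. by rewrite !big_ord_recr big_ord0 /= add0r. Qed.

Definition assoc_coef p (i j k m : nat) :=
  sum3 (fun l => coef p i j l * coef p l k m) - sum3 (fun l => coef p j k l * coef p i l m).

Definition ra_identity p (i j k m : nat) :=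
  assoc_coef p i j k m + (if (j == 2%N) && (k == 2%N) then -1 else 1) * assoc_coef p i k j m = 0.

Lemma smul_deltal (T : structc) y (i : 'I_3) :
  smul T (delta_mx 0 i) y = \sum_(b < 3) y 0 b *: T i b.
Proof.
rewrite /smul (bigD1 i) //= [X in _ + X]big1 ?addr0.
  by apply: eq_bigr => b _; rewrite mxE !eqxx mul1r.
by move=> a ai; apply: big1 => b _; rewrite mxE (negbTE ai) andbF mul0r scale0r.
Qed.

Lemma smul_deltar (T : structc) x (k : 'I_3) :
  smul T x (delta_mx 0 k) = \sum_(a < 3) x 0 a *: T a k.
Proof.
rewrite /smul; apply: eq_bigr => a _; rewrite (bigD1 k) //= big1 ?addr0.
  by rewrite mxE !eqxx mulr1.
by move=> j jk; rewrite mxE (negbTE jk) andbF mulr0 scale0r.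
Qed.

Lemma smul_delta (T : structc) (i j : 'I_3) :
  smul T (delta_mx 0 i) (delta_mx 0 j) = T i j.
Proof.
rewrite smul_deltal (bigD1 j) //= big1 ?addr0; first by rewrite mxE !eqxx scale1r.
by move=> b bj; rewrite mxE (negbTE bj) andbF scale0r.
Qed.

Lemma assoc_delta p (i j k m : 'I_3) :
  assoc (sc p) (delta_mx 0 i) (delta_mx 0 j) (delta_mx 0 k) 0 m = assoc_coef p i j k m.
Proof.
rewrite /assoc !smul_delta smul_deltar smul_deltal mxE [X in _ + X]mxE !summxE /assoc_coef.
rewrite -(sum3E (fun l => coef p i j l * coef p l k m)).
rewrite -(sum3E (fun l => coef p j k l * coef p i l m)).
by congr (_ - _); apply: eq_bigr => a _; rewrite !mxE.
Qed.

Lemma homog_delta (i : 'I_3) : homog (bdeg i) (delta_mx 0 i).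
Proof.
move=> k; rewrite mxE; have [->|ki] := eqVneq k i; first by rewrite eqxx.
by rewrite andbF.
Qed.

Lemma ra_identityP p : right_alternative (sc p) ->
  forall i j k m, (i < 3)%N -> (j < 3)%N -> (k < 3)%N -> (m < 3)%N -> ra_identity p i j k m.
Proof.
move=> hRA i j k m hi hj hk hm.
have := hRA _ _ _ _ _ _ (@homog_delta (Ordinal hi)) (@homog_delta (Ordinal hj))
  (@homog_delta (Ordinal hk)).
move/(congr1 (fun v : 'rV[C]_3 => v 0 (Ordinal hm))).
rewrite /= assoc_delta mxE [X in - X]mxE assoc_delta /ra_identity /bdeg /= => ->.
by case: (_ && _); rewrite ?scaleN1r ?scale1r; ring.
Qed.

Lemma mul_eq0_C (x y : C) : x * y = 0 -> x = 0 \/ y = 0.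
Proof. by move/eqP; rewrite mulf_eq0 => /orP [/eqP|/eqP]; [left|right]. Qed.

Lemma eq0_of_sqr (x : C) : x * x = 0 -> x = 0.
Proof. by case/mul_eq0_C. Qed.

Lemma eq0_of_cube (x : C) : x * (x * x) = 0 -> x = 0.
Proof. by case/mul_eq0_C => // /eq0_of_sqr. Qed.

Lemma idempotent_C (x : C) : x * x - x = 0 -> x = 0 \/ x = 1.
Proof.
move=> h; have /mul_eq0_C[->|/subr0_eq ->] : x * (x - 1) = 0 by rewrite -h; ring.
  by left.
by right.
Qed.

Lemma eq0_scaled (x y k : C) : x = k * y -> y = 0 -> x = 0.
Proof. by move=> -> ->; rewrite mulr0. Qed.

Lemma eq0_scaled2 (x y k : C) : 2 * x = k * y -> y = 0 -> x = 0.
Proof.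
move=> h y0; have /mul_eq0_C[/eqP|//] : 2 * x = 0 by rewrite h y0 mulr0.
by rewrite pnatr_eq0.
Qed.

Lemma neq0_eq (x y : C) : x = y -> y != 0 -> x != 0.
Proof. by move=> ->. Qed.

Lemma exists_inv_sqr (c : C) : c != 0 -> exists2 s : C, s != 0 & c = (s ^+ 2)^-1.
Proof.
move=> c0; exists (sqrtC c^-1); last by rewrite sqrtCK invrK.
by rewrite sqrtC_eq0 invr_eq0.
Qed.

Lemma exists_quad_root (a b : C) : exists r : C, r ^+ 2 = b * r + a.
Proof.
pose w := sqrtC (b ^+ 2 + 4%:R * a).
have w2 : w ^+ 2 = b ^+ 2 + 4%:R * a by rewrite sqrtCK.
have two0 : (2%:R : C) != 0 by rewrite pnatr_eq0.
exists ((b + w) / 2%:R); apply: subr0_eq.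
have -> : ((b + w) / 2%:R) ^+ 2 - (b * ((b + w) / 2%:R) + a) =
          (w ^+ 2 - (b ^+ 2 + 4%:R * a)) / 4%:R by field.
by rewrite w2 subrr mul0r.
Qed.

Lemma det2_id : det2 1 0 0 1 != 0.
Proof. by rewrite /det2 mulr1 mulr0 subr0 oner_eq0. Qed.

Lemma det2_swap : det2 0 1 1 0 != 0.
Proof. by rewrite /det2 mulr0 mulr1 sub0r oppr_eq0 oner_eq0. Qed.

Definition even_zero := EvenTable 0 0 0 0 0 0 0 0.
Definition even_nil := EvenTable 0 1 0 0 0 0 0 0.
Definition even_C := EvenTable 1 0 0 0 0 0 0 0.
Definition even_CxC := EvenTable 1 0 0 0 0 0 0 1.
Definition even_dual := EvenTable 1 0 0 1 0 1 0 0.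
Definition even_left := EvenTable 1 0 0 1 0 0 0 0.
Definition even_right := EvenTable 1 0 0 0 0 1 0 0.

Ltac ra_eq i j k m := let h := fresh "E" in
  have h := @ra_identityP _ ltac:(eassumption) i j k m erefl erefl erefl erefl;
  rewrite /ra_identity /assoc_coef /sum3 /= in h.

Ltac solve_from E :=
  first [ apply: (@eq0_scaled _ _ 1 _ E); ring | apply: (@eq0_scaled _ _ (-1) _ E); ring
        | apply: (@eq0_scaled2 _ _ 1 _ E); ring | apply: (@eq0_scaled2 _ _ (-1) _ E); ring ].

Ltac case_idempotent x h := case: (idempotent_C h) => ?; subst x.

Ltac field_sides := field; try (repeat (apply/andP; split)); try done.

Ltac unfold_rebase :=
  rewrite ?/rebase ?/rebase_even ?/ucoord ?/vcoord ?/emul ?/det2 /=;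
  rewrite ?/even_zero ?/even_nil ?/even_C ?/even_CxC ?/even_dual ?/even_left ?/even_right.

Tactic Notation "rebase_by" uconstr(u0) uconstr(u1) uconstr(v0) uconstr(v1) uconstr(s) :=
  apply (@classifiable_rebase u0 u1 v0 v1 s); rewrite ?/det2 ?oner_eq0 //.

Ltac rebase_eq := unfold_rebase; try congr EvenTable; field_sides.

Ltac model n :=
  try match goal with |- ra_classifiable _ => move=> _ _ end;
  apply: (@classifiable_model n) => //;
  rewrite /params_of /Rmodel /mkSC !mxE; unfold_rebase;
  congr Params; try congr EvenTable; field_sides.

Lemma classify_even_nil p : even p = even_nil -> ra_classifiable p.
Proof.
case: p => g a0 a1 b0 b1 c0 c1 /= -> hRA hN.
ra_eq e2 e2 f1 f1. ra_eq e1 e1 f1 f1. ra_eq f1 e1 e1 f1. ra_eq f1 e1 e2 f1.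
ra_eq f1 e1 f1 e2.
have a1_0 : a1 = 0 by apply: eq0_of_sqr; solve_from E.
subst a1.
have a0_0 : a0 = 0 by apply: eq0_of_sqr; solve_from E0.
have b1E : b1 = b0 * b0 by apply: subr0_eq; solve_from E1.
subst a0 b1.
have b0_0 : b0 = 0 by apply: eq0_of_cube; solve_from E2.
have c0_0 : c0 = 0 by solve_from E3.
subst b0 c0.
have [-> | c1_neq0] := eqVneq c1 0; first by model 37%N.
have [s s_neq0 ?] := exists_inv_sqr c1_neq0; subst c1.
by rebase_by 1 0 0 1 s; [exact: det2_id | model 38%N].
Qed.

Lemma not_nontrivial_zero : ~ nontrivial (sc (Params even_zero 0 0 0 0 0 0)).
Proof.
move=> [x [y]]; rewrite /smul big1 ?eqxx // => i _; apply: big1 => j _.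
have -> : sc (Params even_zero 0 0 0 0 0 0) i j = 0.
  by apply/rowP => k; rewrite !mxE; case_ord3 i; case_ord3 j; case_ord3 k.
by rewrite scaler0.
Qed.

Lemma classify_even_zero p : even p = even_zero -> ra_classifiable p.
Proof.
case: p => g a0 a1 b0 b1 c0 c1 /= -> hRA hN.
ra_eq e1 e1 f1 f1. ra_eq e2 e2 f1 f1. ra_eq f1 e1 e1 f1. ra_eq f1 e2 e2 f1.
have a0_0 : a0 = 0 by apply: eq0_of_sqr; solve_from E.
have a1_0 : a1 = 0 by apply: eq0_of_sqr; solve_from E0.
have b0_0 : b0 = 0 by apply: eq0_of_sqr; solve_from E1.
have b1_0 : b1 = 0 by apply: eq0_of_sqr; solve_from E2.
subst a0 a1 b0 b1.
have [c0_0 | c0_neq0] := eqVneq c0 0; last first.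
  rebase_by c0 c1 0 1 1; last by model 39%N.
  by apply: (@neq0_eq _ c0); rewrite /det2 //; ring.
subst c0; have [c1_0 | c1_neq0] := eqVneq c1 0; first by subst c1; case: not_nontrivial_zero.
rebase_by 0 c1 1 0 1; last by model 39%N.
by apply: (@neq0_eq _ (- c1)); rewrite /det2 ?oppr_eq0 //; ring.
Qed.

Lemma classify_even_C p : even p = even_C -> ra_classifiable p.
Proof.
case: p => g a0 a1 b0 b1 c0 c1 /= -> hRA hN.
ra_eq e1 e1 f1 f1. ra_eq e2 e2 f1 f1. ra_eq f1 e1 e1 f1. ra_eq f1 e2 e2 f1.
ra_eq f1 e1 f1 e1. ra_eq f1 e1 f1 e2.
have a1_0 : a1 = 0 by apply: eq0_of_sqr; solve_from E0.
have b1_0 : b1 = 0 by apply: eq0_of_sqr; solve_from E2.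
subst a1 b1.
have a0_idem : a0 * a0 - a0 = 0 by solve_from E.
have b0_idem : b0 * b0 - b0 = 0 by solve_from E1.
have c0E : c0 - a0 * c0 = 0 by solve_from E3.
have c1E : a0 * c1 = 0 by solve_from E4.
case_idempotent a0 a0_idem.
- have c0_0 : c0 = 0 by rewrite -c0E; ring.
  subst c0; have [-> | c1_neq0] := eqVneq c1 0.
    by case_idempotent b0 b0_idem; [model 9%N | model 11%N].
  case_idempotent b0 b0_idem.
  + rebase_by 1 0 0 c1 1; last by model 10%N.
    by apply: (@neq0_eq _ c1); rewrite /det2 //; ring.
  + rebase_by 1 0 0 c1 1; last by model 12%N.
    by apply: (@neq0_eq _ c1); rewrite /det2 //; ring.
- have c1_0 : c1 = 0 by rewrite -c1E; ring.
  subst c1; have [-> | c0_neq0] := eqVneq c0 0.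
    by case_idempotent b0 b0_idem; [model 13%N | model 15%N].
  have [s s_neq0 ?] := exists_inv_sqr c0_neq0; subst c0.
  case_idempotent b0 b0_idem.
  + by rebase_by 1 0 0 1 s; [exact: det2_id | model 14%N].
  + by rebase_by 1 0 0 1 s; [exact: det2_id | model 16%N].
Qed.

Lemma classify_even_CxC_ef1 p : even p = even_CxC -> ef1 p = 0 -> ra_classifiable p.
Proof.
case: p => g a0 a1 b0 b1 c0 c1 /= -> -> hRA hN.
ra_eq e1 e1 f1 f1. ra_eq f1 e1 e1 f1. ra_eq f1 e2 e2 f1. ra_eq f1 e1 e2 f1.
ra_eq f1 e1 f1 e1. ra_eq f1 e2 f1 e2.
have a0_idem : a0 * a0 - a0 = 0 by solve_from E.
have b0_idem : b0 * b0 - b0 = 0 by solve_from E0.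
have b1_idem : b1 * b1 - b1 = 0 by solve_from E1.
have b0b1 : b0 * b1 = 0 by solve_from E2.
have c0E : c0 - a0 * c0 = 0 by solve_from E3.
have c1_0 : c1 = 0 by solve_from E4.
subst c1; case_idempotent a0 a0_idem.
- have c0_0 : c0 = 0 by rewrite -c0E; ring.
  subst c0; case_idempotent b0 b0_idem; case_idempotent b1 b1_idem.
  + by model 1%N.
  + by rebase_by 0 1 1 0 1; [exact: det2_swap | model 4%N].
  + by model 4%N.
  + by move/eqP: b0b1; rewrite mulr1 oner_eq0.
- case_idempotent b0 b0_idem; case_idempotent b1 b1_idem.
  + have [-> | c0_neq0] := eqVneq c0 0; first by model 5%N.
    have [s s_neq0 ?] := exists_inv_sqr c0_neq0; subst c0.
    by rebase_by 1 0 0 1 s; [exact: det2_id | model 6%N].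
  + have [c0_0 | c0_neq0] := eqVneq c0 0.
      by subst c0; rebase_by 0 1 1 0 1; [exact: det2_swap | model 7%N].
    have [s s_neq0 ?] := exists_inv_sqr c0_neq0; subst c0.
    by rebase_by 0 1 1 0 s; [exact: det2_swap | model 8%N].
  + have [-> | c0_neq0] := eqVneq c0 0; first by model 2%N.
    have [s s_neq0 ?] := exists_inv_sqr c0_neq0; subst c0.
    by rebase_by 1 0 0 1 s; [exact: det2_id | model 3%N].
  + by move/eqP: b0b1; rewrite mulr1 oner_eq0.
Qed.

Lemma classify_even_CxC p : even p = even_CxC -> ra_classifiable p.
Proof.
case: p => g a0 a1 b0 b1 c0 c1 /= -> hRA hN.
ra_eq e2 e2 f1 f1. ra_eq e1 e2 f1 f1.
have a1_idem : a1 * a1 - a1 = 0 by solve_from E.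
have a0a1 : a0 * a1 = 0 by solve_from E0.
case_idempotent a1 a1_idem; first exact: classify_even_CxC_ef1.
have a0_0 : a0 = 0 by rewrite -a0a1; ring.
subst a0; rebase_by 0 1 1 0 1; first exact: det2_swap.
by apply: classify_even_CxC_ef1; rebase_eq.
Qed.

Lemma classify_even_dual p : even p = even_dual -> ra_classifiable p.
Proof.
case: p => g a0 a1 b0 b1 c0 c1 /= -> hRA hN.
ra_eq e2 e2 f1 f1. ra_eq e1 e1 f1 f1. ra_eq f1 e2 e2 f1. ra_eq f1 e1 e1 f1.
ra_eq f1 e2 f1 e2. ra_eq f1 e1 f1 e2.
have a1_0 : a1 = 0 by apply: eq0_of_sqr; solve_from E.
have b1_0 : b1 = 0 by apply: eq0_of_sqr; solve_from E1.
subst a1 b1.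
have a0_idem : a0 * a0 - a0 = 0 by solve_from E0.
have b0_idem : b0 * b0 - b0 = 0 by solve_from E2.
have c0_0 : c0 = 0 by solve_from E3.
have c1E : c1 - a0 * c1 = 0 by solve_from E4.
subst c0; case_idempotent a0 a0_idem.
- have -> : c1 = 0 by rewrite -c1E; ring.
  by case_idempotent b0 b0_idem; [model 17%N | model 20%N].
- have [-> | c1_neq0] := eqVneq c1 0.
    by case_idempotent b0 b0_idem; [model 18%N | model 21%N].
  have [s s_neq0 ?] := exists_inv_sqr c1_neq0; subst c1.
  case_idempotent b0 b0_idem.
  + by rebase_by 1 0 0 1 s; [exact: det2_id | model 19%N].
  + by rebase_by 1 0 0 1 s; [exact: det2_id | model 22%N].
Qed.

Lemma classify_even_left p : even p = even_left -> ra_classifiable p.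
Proof.
case: p => g a0 a1 b0 b1 c0 c1 /= -> hRA hN.
ra_eq e2 e2 f1 f1. ra_eq e1 e1 f1 f1. ra_eq f1 e2 e2 f1. ra_eq f1 e1 e1 f1.
ra_eq f1 e2 f1 e2. ra_eq f1 e1 f1 e2.
have a1_0 : a1 = 0 by apply: eq0_of_sqr; solve_from E.
have b1_0 : b1 = 0 by apply: eq0_of_sqr; solve_from E1.
subst a1 b1.
have a0_idem : a0 * a0 - a0 = 0 by solve_from E0.
have b0_idem : b0 * b0 - b0 = 0 by solve_from E2.
have c0_0 : c0 = 0 by solve_from E3.
have c1E : a0 * c1 = 0 by solve_from E4.
subst c0; case_idempotent a0 a0_idem.
- have [-> | c1_neq0] := eqVneq c1 0.
    by case_idempotent b0 b0_idem; [model 23%N | model 29%N].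
  have [s s_neq0 ?] := exists_inv_sqr c1_neq0; subst c1.
  case_idempotent b0 b0_idem.
  + by rebase_by 1 0 0 1 s; [exact: det2_id | model 24%N].
  + by rebase_by 1 0 0 1 s; [exact: det2_id | model 30%N].
- have -> : c1 = 0 by rewrite -c1E; ring.
  by case_idempotent b0 b0_idem; [model 32%N | model 36%N].
Qed.

Lemma classify_even_right p : even p = even_right -> ra_classifiable p.
Proof.
case: p => g a0 a1 b0 b1 c0 c1 /= -> hRA hN.
ra_eq e2 e2 f1 f1. ra_eq e1 e1 f1 f1. ra_eq f1 e2 e2 f1. ra_eq f1 e1 e1 f1.
ra_eq f1 e1 f1 e1. ra_eq f1 e1 f1 e2.
have a1_0 : a1 = 0 by apply: eq0_of_sqr; solve_from E.
have b1_0 : b1 = 0 by apply: eq0_of_sqr; solve_from E1.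
subst a1 b1.
have a0_idem : a0 * a0 - a0 = 0 by solve_from E0.
have b0_idem : b0 * b0 - b0 = 0 by solve_from E2.
have c0E : c0 - a0 * c0 = 0 by solve_from E3.
have c1E : c1 - a0 * c1 = 0 by solve_from E4.
case_idempotent a0 a0_idem.
- have -> : c0 = 0 by rewrite -c0E; ring.
  have -> : c1 = 0 by rewrite -c1E; ring.
  by case_idempotent b0 b0_idem; [model 25%N | model 31%N].
- have [c0_0 | c0_neq0] := eqVneq c0 0.
    subst c0; have [-> | c1_neq0] := eqVneq c1 0.
      by case_idempotent b0 b0_idem; [model 26%N | model 33%N].
    have [s s_neq0 ?] := exists_inv_sqr c1_neq0; subst c1.
    case_idempotent b0 b0_idem.
    + by rebase_by 1 0 0 1 s; [exact: det2_id | model 28%N].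
    + by rebase_by 1 0 0 1 s; [exact: det2_id | model 35%N].
  have [s s_neq0 ?] := exists_inv_sqr c0_neq0; subst c0.
  have det_neq0 : det2 1 (c1 * s ^+ 2) 0 1 != 0.
    by apply: (@neq0_eq _ 1); rewrite /det2 ?oner_eq0 //; ring.
  case_idempotent b0 b0_idem.
  + by rebase_by 1 (c1 * s ^+ 2) 0 1 s; model 27%N.
  + by rebase_by 1 (c1 * s ^+ 2) 0 1 s; model 34%N.
Qed.

(* The even part is t C[t] / (t^3 - g011 t^2 - g010 t) with e1 = t, e2 = t^2;
   the rebasings below are read off from the roots 0, r, r2 of
   t^3 - g011 t^2 - g010 t. *)
Lemma classify_e1_sqr_e2 p :
  g000 (even p) = 0 -> g001 (even p) = 1 -> ra_classifiable p.
Proof.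
case: p => [[? ? t010 t011 t100 t101 t110 t111]] a0 a1 b0 b1 c0 c1 /= -> -> hRA hN.
ra_eq e1 e1 e1 e1. ra_eq e1 e1 e1 e2.
have t100E : t100 = t010 by apply: subr0_eq; solve_from E.
have t101E : t101 = t011 by apply: subr0_eq; solve_from E0.
subst t100 t101.
ra_eq e2 e1 e1 e1. ra_eq e2 e1 e1 e2.
have t110E : t110 = t010 * t011 by apply: subr0_eq; solve_from E1.
have t111E : t111 = t010 + t011 * t011 by apply: subr0_eq; solve_from E2.
subst t110 t111.
have [t010_0 | t010_neq0] := eqVneq t010 0.
  subst t010; have [t011_0 | t011_neq0] := eqVneq t011 0.
    by subst t011; apply: classify_even_nil => //; rebase_eq.
  rebase_by 0 (t011 ^-2) (- t011) 1 1.
    by apply: (@neq0_eq _ (t011 ^-1)); [field_sides | rewrite invr_eq0].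
  by apply: classify_even_C; rebase_eq.
have [r r_root] := exists_quad_root t010 t011.
have [r2 t011E] : exists r2, t011 = r + r2 by exists (t011 - r); ring.
subst t011.
have t010E : t010 = - (r * r2).
  by apply: (addrI ((r + r2) * r)); rewrite -r_root; ring.
subst t010.
rewrite oppr_eq0 mulf_eq0 negb_or in t010_neq0; case/andP: t010_neq0 => r_neq0 r2_neq0.
have [r_r2 | r_neq_r2] := eqVneq r r2.
  subst r2; rebase_by (2%:R / r) (- (r * r)^-1) (-1) (r^-1) 1.
    by apply: (@neq0_eq _ ((r * r)^-1)); [field_sides | rewrite invr_eq0 mulf_neq0].
  by apply: classify_even_dual; rebase_eq.
have rr2 : r - r2 != 0 by rewrite subr_eq0.
have r2r : r2 - r != 0 by rewrite subr_eq0 eq_sym.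
rebase_by (- r2 / (r * (r - r2))) ((r * (r - r2))^-1)
  (- r / (r2 * (r2 - r))) ((r2 * (r2 - r))^-1) 1.
  apply: (@neq0_eq _ (- (r * r2 * (r - r2))^-1)); first by field_sides.
  by rewrite oppr_eq0 invr_eq0 !mulf_neq0.
by apply: classify_even_CxC; rebase_eq.
Qed.

Definition sq_det (g : even_table) (y0 y1 : C) :=
  y0 * emul g y0 y1 y0 y1 1 - y1 * emul g y0 y1 y0 y1 0.

Lemma add_eqs0 (x y : C) : x = 0 -> y = 0 -> x + y = 0.
Proof. by move=> -> ->; rewrite addr0. Qed.

Lemma sub_eqs0 (x y : C) : x = 0 -> y = 0 -> x - y = 0.
Proof. by move=> -> ->; rewrite subr0. Qed.

Lemma classify_e1_idempotent p : g000 (even p) = 1 -> g001 (even p) = 0 ->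
  (forall y0 y1, sq_det (even p) y0 y1 = 0) -> ra_classifiable p.
Proof.
case: p => [[? ? t010 t011 t100 t101 t110 t111]] a0 a1 b0 b1 c0 c1 /= -> -> hD.
have D01 := hD 0 1; have D11 := hD 1 1; have D1m := hD 1 (-1).
have Dp := add_eqs0 D11 D1m; have Dm := sub_eqs0 D11 D1m.
rewrite /sq_det /emul /= in D01 Dp Dm.
have t110_0 : t110 = 0 by solve_from D01.
subst t110.
have t011_t101 : t011 + t101 - 1 = 0 by solve_from Dm.
have t111_t010 : t111 - t010 - t100 = 0 by solve_from Dp.
have t011E : t011 = 1 - t101 by rewrite -[t011]subr0 -t011_t101; ring.
have t111E : t111 = t010 + t100 by rewrite -[t111]subr0 -t111_t010; ring.
subst t011 t111 => hRA hN.
ra_eq e2 e1 e1 e1. ra_eq e2 e1 e1 e2. ra_eq e1 e2 e2 e2.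
have t101t100 : t101 * t100 = 0 by solve_from E.
have t101_idem : t101 * t101 - t101 = 0 by solve_from E0.
have t010t101 : t010 * (1 - t101) = 0 by solve_from E1.
case_idempotent t101 t101_idem.
- have t010_0 : t010 = 0 by rewrite -t010t101; ring.
  subst t010; rebase_by 1 0 (- t100) 1 1; first by apply: (@neq0_eq _ 1); [ring | exact: oner_neq0].
  by apply: classify_even_left; rebase_eq.
- have t100_0 : t100 = 0 by rewrite -t101t100; ring.
  subst t100; rebase_by 1 0 (- t010) 1 1; first by apply: (@neq0_eq _ 1); [ring | exact: oner_neq0].
  by apply: classify_even_right; rebase_eq.
Qed.

Lemma sq_det_rebase g u0 u1 v0 v1 y0 y1 : det2 u0 u1 v0 v1 != 0 ->
  sq_det (rebase_even u0 u1 v0 v1 g) y0 y1 =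
  sq_det g (y0 * u0 + y1 * v0) (y0 * u1 + y1 * v1) / det2 u0 u1 v0 v1.
Proof. by move=> hd; rewrite /sq_det /rebase_even /ucoord /vcoord /emul /=; field. Qed.

Lemma classify_idempotent p u0 u1 :
  emul (even p) u0 u1 u0 u1 0 = u0 -> emul (even p) u0 u1 u0 u1 1 = u1 ->
  (u0 != 0) || (u1 != 0) -> (forall y0 y1, sq_det (even p) y0 y1 = 0) ->
  ra_classifiable p.
Proof.
move=> u2_0 u2_1 u_neq0 hD.
suff [v0 [v1 hd]] : exists v0 v1, u0 * v1 - u1 * v0 != 0.
  rebase_by u0 u1 v0 v1 1; apply: classify_e1_idempotent; rewrite /rebase /=.
  - by rewrite /ucoord /det2 u2_0 u2_1; field.
  - by rewrite /vcoord /det2 u2_0 u2_1; field.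
  - by move=> y0 y1; rewrite sq_det_rebase // hD mul0r.
have [u0_0 | u0_neq0] := eqVneq u0 0.
  exists 1, 0; apply: (@neq0_eq _ (- u1)); first by ring.
  by rewrite oppr_eq0; move: u_neq0; rewrite u0_0 eqxx.
by exists 0, 1; apply: (@neq0_eq _ u0); first by ring.
Qed.

Lemma classify_sqr_zero p :
  (forall x0 x1, emul (even p) x0 x1 x0 x1 0 = 0 /\ emul (even p) x0 x1 x0 x1 1 = 0) ->
  ra_classifiable p.
Proof.
case: p => [[t000 t001 t010 t011 t100 t101 t110 t111]] a0 a1 b0 b1 c0 c1 /= sqr0.
have [sq10_0 sq10_1] := sqr0 1 0; have [sq01_0 sq01_1] := sqr0 0 1.
have [sq11_0 sq11_1] := sqr0 1 1.
rewrite /emul /= in sq10_0 sq10_1 sq01_0 sq01_1 sq11_0 sq11_1.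
have t000_0 : t000 = 0 by solve_from sq10_0.
have t001_0 : t001 = 0 by solve_from sq10_1.
have t110_0 : t110 = 0 by solve_from sq01_0.
have t111_0 : t111 = 0 by solve_from sq01_1.
subst t000 t001 t110 t111.
have t100E : t100 = - t010 by apply: subr0_eq; solve_from sq11_0.
have t101E : t101 = - t011 by apply: subr0_eq; solve_from sq11_1.
subst t100 t101 => hRA hN.
ra_eq e1 e2 e2 e1. ra_eq e2 e1 e1 e2.
have t010_0 : t010 = 0 by apply: eq0_of_sqr; solve_from E.
have t011_0 : t011 = 0 by apply: eq0_of_sqr; solve_from E0.
by subst t010 t011; apply: classify_even_zero => //; rebase_eq.
Qed.

(* If every even y has y^2 on the line C y, a nonzero square x^2 = l x yields
   the idempotent x / l. *)
Lemma exists_idempotent g x0 x1 : (forall y0 y1, sq_det g y0 y1 = 0) ->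
  ~ (emul g x0 x1 x0 x1 0 = 0 /\ emul g x0 x1 x0 x1 1 = 0) ->
  exists u0 u1,
    [/\ emul g u0 u1 u0 u1 0 = u0, emul g u0 u1 u0 u1 1 = u1 & (u0 != 0) || (u1 != 0)].
Proof.
move=> hD; set q0 := emul g x0 x1 x0 x1 0; set q1 := emul g x0 x1 x0 x1 1 => q_neq0.
have x0q1 : x0 * q1 = x1 * q0 by apply: subr0_eq; exact: hD.
have emul_scale l k : l != 0 ->
    emul g (x0 / l) (x1 / l) (x0 / l) (x1 / l) k = emul g x0 x1 x0 x1 k / (l * l).
  by move=> l_neq0; rewrite /emul; field.
suff [l l_neq0 [q0E q1E]] : exists2 l, l != 0 & q0 = l * x0 /\ q1 = l * x1.
  exists (x0 / l), (x1 / l); split.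
  - by rewrite emul_scale // -/q0 q0E; field.
  - by rewrite emul_scale // -/q1 q1E; field.
  - have [x0_0 | x0_neq0] := eqVneq x0 0; last by rewrite mulf_neq0 ?invr_eq0.
    have [x1_0 | x1_neq0] := eqVneq x1 0; last by rewrite orbC mulf_neq0 ?invr_eq0.
    by case: q_neq0; rewrite q0E q1E x0_0 x1_0 !mulr0.
have [x0_0 | x0_neq0] := eqVneq x0 0.
  have x1_neq0 : x1 != 0.
    apply/eqP => x1_0; apply: q_neq0; rewrite /q0 /q1 x0_0 x1_0 /emul.
    by split; ring.
  have q0_0 : q0 = 0.
    by move: x0q1; rewrite x0_0 mul0r => /esym/mul_eq0_C[/eqP|//]; rewrite (negbTE x1_neq0).
  have q1_neq0 : q1 != 0 by apply/eqP => q1_0; apply: q_neq0.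
  exists (q1 / x1); first by rewrite mulf_neq0 ?invr_eq0.
  by split; [rewrite q0_0 x0_0 mulr0 | field].
have q0_neq0 : q0 != 0.
  apply/eqP => q0_0; move: x0q1; rewrite q0_0 mulr0 => /mul_eq0_C[x0_0 | q1_0].
    by move: x0_neq0; rewrite x0_0 eqxx.
  by apply: q_neq0.
exists (q0 / x0); first by rewrite mulf_neq0 ?invr_eq0.
split; first by field.
by apply: (mulfI x0_neq0); rewrite x0q1; field.
Qed.

Lemma forall2_or_exists2_not (P : C -> C -> Prop) :
  (forall a b, P a b) \/ exists a b, ~ P a b.
Proof.
have [|/not_all_ex_not [a /not_all_ex_not [b nP]]] := classic (forall a b, P a b).
  by left.
by right; exists a, b.
Qed.

Lemma classify_params p : ra_classifiable p.
Proof.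
have [sqr0 | [x0 [x1 x2_neq0]]] := forall2_or_exists2_not
  (fun x0 x1 => emul (even p) x0 x1 x0 x1 0 = 0 /\ emul (even p) x0 x1 x0 x1 1 = 0).
  exact: classify_sqr_zero.
have [D0 | [y0 [y1 /eqP Dy_neq0]]] :=
  forall2_or_exists2_not (fun y0 y1 => sq_det (even p) y0 y1 = 0); last first.
  rebase_by y0 y1 (emul (even p) y0 y1 y0 y1 0) (emul (even p) y0 y1 y0 y1 1) 1.
  move: Dy_neq0; rewrite /sq_det => Dy_neq0.
  by apply: classify_e1_sqr_e2; rewrite /rebase /rebase_even /ucoord /vcoord /det2 /=; field.
have [u0 [u1 [u2_0 u2_1 u_neq0]]] := exists_idempotent D0 x2_neq0.
exact: classify_idempotent u2_0 u2_1 u_neq0 D0.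
Qed.

Theorem theoremA2 (T : structc) :
  graded T -> right_alternative T -> nontrivial T ->
  exists2 n : nat, (1 <= n <= 39)%N & super_iso T (Rmodel n).
Proof. by move=> gT; rewrite -(params_ofK gT); exact: classify_params. Qed.
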